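(* Let $p\in[1,\infty]$ and let $(X,d,\mu)$ be an infinitesimally doubling metric measure space which is $p$-thick geodesic. Then $d=d_p$.
   Context: A metric measure space is a proper metric space with a Borel regular outer measure positive and finite on balls; infinitesimally doubling means $\limsup_{r\to0}\mu(B(x,2r))/\mu(B(x,r))<\infty$ for $\mu$-a.e. $x$. $\operatorname{Mod}_p\Gamma=\inf\int\rho^pd\mu$ (for $p<\infty$), $\operatorname{Mod}_\infty\Gamma=\inf\|\rho\|_{L^\infty}$, over Borel $\rho\ge0$ with $\int_\gamma\rho\ge1$ on $\Gamma$. $\Gamma(E,F;C)$ is the family of curves $\gamma:[0,1]\to X$ with $\gamma(0)\in E,\gamma(1)\in F,\ell(\gamma)\le Cd(\gamma(0),\gamma(1))$; $X$ is $p$-thick geodesic if $\operatorname{Mod}_p\Gamma(E,F;C)>0$ for all $C>1$ and all measurable $E,F$ of positive measure. With $\Gamma(E,F)$ the Lipschitz curves $[0,1]\to X$ from $E$ to $F$, $ess\ell_p(\Gamma):=\sup_{\operatorname{Mod}_p\Gamma_0=0}\inf\{\ell(\gamma):\gamma\in\Gamma\setminus\Gamma_0\}$ ($\inf\emptyset=\infty$), $d_p'(x,y):=\lim_{\delta\to0}ess\ell_p\Gamma(\bar B(x,\delta),\bar B(y,\delta))$, and $d_p(x,y):=\inf\{\sum_{i=1}^nd_p'(x_{i-1},x_i):x_0=x,x_n=y\}$. *)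

From HB Require Import structures.
From mathcomp Require Import all_boot all_order all_algebra.
From mathcomp Require Import all_classical all_reals all_analysis measurable_realfun ess_sup_inf.
Set Implicit Arguments. Unset Strict Implicit. Unset Printing Implicit Defensive.
Import Order.TTheory GRing.Theory Num.Def Num.Theory.
Import numFieldNormedType.Exports.
Local Open Scope classical_set_scope.
Local Open Scope ring_scope.

Section MetricMeasure.
Context {R : realType} {disp : measure_display} {X : measurableType disp}.
Variable d : X -> X -> R.

Definition is_metric : Prop :=
  [/\ forall x y, d x y = 0 <-> x = y,
      forall x y, d x y = d y x &
      forall x y z, d x z <= d x y + d y z].

Definition oball (x : X) (r : R) : set X := [set y | d x y < r].
Definition cball (x : X) (r : R) : set X := [set y | d x y <= r].

Definition dopen (U : set X) : Prop :=
  forall x, U x -> exists2 r : R, 0 < r & oball x r `<=` U.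

Definition dcompact (K : set X) : Prop :=
  forall (I : Type) (U : I -> set X), (forall i, dopen (U i)) ->
    K `<=` \bigcup_(i in setT) U i ->
    exists2 J : set I, finite_set J & K `<=` \bigcup_(i in J) U i.

Definition proper_space : Prop := forall x r, dcompact (cball x r).

Definition borel_structure : Prop :=
  @measurable _ X = <<s dopen >>.

Definition balls_pos_finite (mu : {measure set X -> \bar R}) : Prop :=
  forall x r, 0 < r -> (0 < mu (oball x r) < +oo)%E.

Definition inf_doubling (mu : {measure set X -> \bar R}) : Prop :=
  {ae mu, forall x,
    (limf_esup (fun r : R => (fine (mu (oball x (2 * r))) /
                              fine (mu (oball x r)))%:E) (0%R)^'+ < +oo)%E}.

(* a curve is gamma : R -> X, only its restriction to [0,1] matters *)

Definition curve_cont (g : R -> X) : Prop :=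
  forall t, 0 <= t <= 1 -> forall e, 0 < e -> exists2 del, 0 < del &
    forall s, 0 <= s <= 1 -> `|s - t| < del -> d (g s) (g t) < e.

Definition curve_lip (g : R -> X) : Prop :=
  exists L : R, forall s t, 0 <= s <= 1 -> 0 <= t <= 1 ->
    d (g s) (g t) <= L * `|s - t|.

Definition lengthOn (g : R -> X) (a b : R) : \bar R :=
  ereal_sup [set l | exists (n : nat) (t : nat -> R),
       [/\ t 0%N = a, t n = b, (forall i, (i < n)%N -> t i <= t i.+1) &
            l = (\sum_(i < n) d (g (t i)) (g (t i.+1)))%:E]].

Definition clength (g : R -> X) : \bar R := lengthOn g 0 1.

Definition arclen (g : R -> X) (s : R) : X :=
  g (inf [set t : R | 0 <= t <= 1 /\ (s%:E <= lengthOn g 0 t)%E]).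

Definition line_int (rho : X -> \bar R) (g : R -> X) : \bar R :=
  if clength g is l%:E then
    \int[lebesgue_measure]_(s in `[0%R, l]%classic) rho (arclen g s)
  else +oo%E.

Definition admissible (G : set (R -> X)) (rho : X -> \bar R) : Prop :=
  [/\ measurable_fun [set: X] rho, forall x, (0 <= rho x)%E &
      forall g, G g -> (1 <= line_int rho g)%E].

Definition Mod (mu : {measure set X -> \bar R}) (p : \bar R)
  (G : set (R -> X)) : \bar R :=
  match p with
  | q%:E => ereal_inf [set (\int[mu]_x (poweR (rho x) q))%E | rho in admissible G]
  | _ => ereal_inf [set ess_sup mu rho | rho in admissible G]
  end.

Definition GammaC (E F : set X) (C : R) : set (R -> X) :=
  [set g | curve_cont g /\ E (g 0) /\ F (g 1) /\
           (clength g <= (C * d (g 0) (g 1))%:E)%E].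

Definition GammaLip (E F : set X) : set (R -> X) :=
  [set g | curve_lip g /\ E (g 0) /\ F (g 1)].

Definition thick_geodesic (mu : {measure set X -> \bar R}) (p : \bar R) : Prop :=
  forall C : R, 1 < C -> forall E F : set X, measurable E -> measurable F ->
    (0 < mu E)%E -> (0 < mu F)%E -> (0 < Mod mu p (GammaC E F C))%E.

Definition ess_len (mu : {measure set X -> \bar R}) (p : \bar R)
  (G : set (R -> X)) : \bar R :=
  ereal_sup [set ereal_inf [set clength g | g in G `\` G0] |
             G0 in [set G0 | Mod mu p G0 = 0%E]].

Definition dp' (mu : {measure set X -> \bar R}) (p : \bar R) (x y : X) : \bar R :=
  lim ((fun del : R => ess_len mu p (GammaLip (cball x del) (cball y del)))
         @ (0%R)^'+).

Definition dp (mu : {measure set X -> \bar R}) (p : \bar R) (x y : X) : \bar R :=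
  ereal_inf [set l | exists (n : nat) (xs : nat -> X),
     [/\ (0 < n)%N, xs 0%N = x, xs n = y &
          l = (\sum_(i < n) dp' mu p (xs i) (xs i.+1))%E]].

End MetricMeasure.

From HB Require Import structures.
From mathcomp Require Import all_boot all_order all_algebra.
From mathcomp Require Import all_classical all_reals all_analysis measurable_realfun ess_sup_inf.
From mathcomp Require Import zify lra.
Set Implicit Arguments. Unset Strict Implicit. Unset Printing Implicit Defensive.
Import Order.TTheory GRing.Theory Num.Def Num.Theory.
Import numFieldNormedType.Exports.
Local Open Scope classical_set_scope.
Local Open Scope ring_scope.

(* Every curve from B(x,δ) to B(y,δ) (closed balls) has length at least
   d(x,y) - 2δ, and the empty family has modulus zero, so d_p' >= d.
   Conversely, let Γ0 have modulus zero.  p-thickness applied to the open balls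
   B(x,δ), B(y,δ) and C = 1 + δ/(d(x,y) + 2δ) yields a family of positive
   modulus of continuous curves of length at most d(x,y) + 3δ.  Reparametrised
   proportionally to arc length these curves become Lipschitz with unchanged
   line integrals, so if all of them lay in Γ0, every ρ admissible for Γ0 would
   be admissible for the whole family and its modulus would vanish.  Hence
   d_p' = d, and d_p = d by the triangle inequality. *)

Section Metric.
Context {R : realType} {disp : measure_display} {X : measurableType disp}.
Variable d : X -> X -> R.
Hypothesis dm : is_metric d.

Lemma metricxx x : d x x = 0.
Proof. by case: dm => H _ _; apply H. Qed.

Lemma metricC x y : d x y = d y x.
Proof. by case: dm. Qed.

Lemma metric_triangle_le x y z : d x z <= d x y + d y z.
Proof. by case: dm. Qed.

Lemma metric_ge0 x y : 0 <= d x y.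
Proof. have := metric_triangle_le x y x; rewrite metricxx (metricC y x); lra. Qed.

Lemma metric_eq0 x y : d x y = 0 -> x = y.
Proof. by case: dm => H _ _; apply H. Qed.

Lemma metric_chain (xs : nat -> X) n :
  d (xs 0%N) (xs n) <= \sum_(i < n) d (xs i) (xs i.+1).
Proof.
elim: n => [|n IH]; first by rewrite big_ord0 metricxx.
rewrite big_ord_recr /=.
have := metric_triangle_le (xs 0%N) (xs n) (xs n.+1); lra.
Qed.

End Metric.

Section Partition.
Context {R : realType}.

Definition is_partition (a b : R) n (t : nat -> R) :=
  [/\ t 0%N = a, t n = b & forall i, (i < n)%N -> t i <= t i.+1].

Definition pair_partition (a b : R) (i : nat) := if i == 0%N then a else b.

Definition cat_partition n (t u : nat -> R) (i : nat) :=
  if (i <= n)%N then t i else u (i - n)%N.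

Lemma is_partition_behead a b n t :
  is_partition a b n.+1 t -> is_partition (t 1%N) b n (fun i => t i.+1).
Proof. by case=> h0 hn hm; split => // i hi; apply: hm. Qed.

Lemma is_partition_mono a b n t : is_partition a b n t ->
  forall i j, (i <= j <= n)%N -> t i <= t j.
Proof.
case=> _ _ hm i j /andP[hij hjn].
have: forall k, (i + k <= n)%N -> t i <= t (i + k)%N.
  elim=> [|k IH] hk; first by rewrite addn0.
  apply: le_trans (IH _) _; first lia.
  by rewrite addnS; apply: hm; lia.
by move=> /(_ (j - i)%N); rewrite subnKC //; apply; lia.
Qed.

Lemma is_partition_range a b n t : is_partition a b n t ->
  forall i, (i <= n)%N -> a <= t i <= b.
Proof.
move=> hp i hi; have [h0 hn _] := hp.
by rewrite -h0 -hn !(is_partition_mono hp) //; apply/andP; split.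
Qed.

Lemma is_partition_le a b n t : is_partition a b n t -> a <= b.
Proof.
by move=> hp; have := is_partition_range hp (leqnn n); case: hp => _ -> _ /andP[].
Qed.

Lemma is_partition_pair a b : a <= b -> is_partition a b 1 (pair_partition a b).
Proof. by move=> ab; split => // -[]. Qed.

Lemma is_partition_cat a b c n m t u : is_partition a b n t -> is_partition b c m u ->
  is_partition a c (n + m) (cat_partition n t u).
Proof.
move=> [t0 tn tm] [u0 um umm]; split.
- by rewrite /cat_partition leq0n.
- rewrite /cat_partition; case: ifP => H; last by rewrite addKn.
  have m0 : m = 0%N by lia.
  by rewrite m0 addn0 tn -u0 -um m0.
- move=> i hi; rewrite /cat_partition.
  case: (ltnP i n) => hin; first by rewrite (ltnW hin); apply: tm.
  case: (eqVneq i n) => [->|hne].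
    by rewrite leqnn subSn // subnn tn -u0; apply: umm; lia.
  have -> : (i <= n)%N = false by lia.
  by rewrite subSn //; apply: umm; lia.
Qed.

End Partition.

Section ChordSum.
Context {R : realType} {disp : measure_display} {X : measurableType disp}.
Variable d : X -> X -> R.

Definition chord_sum (g : R -> X) n (t : nat -> R) :=
  \sum_(i < n) d (g (t i)) (g (t i.+1)).

Lemma chord_sum0 g t : chord_sum g 0 t = 0.
Proof. by rewrite /chord_sum big_ord0. Qed.

Lemma chord_sumS g n t :
  chord_sum g n.+1 t = d (g (t 0%N)) (g (t 1%N)) + chord_sum g n (fun i => t i.+1).
Proof. by rewrite /chord_sum big_ord_recl. Qed.

Lemma chord_sum_pair g a b : chord_sum g 1 (pair_partition a b) = d (g a) (g b).
Proof. by rewrite chord_sumS chord_sum0 addr0. Qed.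

Lemma chord_sum_cat g n m t u : t n = u 0%N ->
  chord_sum g (n + m) (cat_partition n t u) = chord_sum g n t + chord_sum g m u.
Proof.
move=> tu; rewrite /chord_sum big_split_ord /=; congr (_ + _).
  by apply: eq_bigr => i _; rewrite /cat_partition /= ltnW // ltn_ord.
apply: eq_bigr => i _; rewrite /cat_partition /=.
have -> : (n + i < n)%N = false by lia.
rewrite -addnS !addKn; congr (d _ _).
case: ifP => // H.
have i0 : (i : nat) = 0%N by move: H; clear; lia.
by rewrite i0 addn0 tu.
Qed.

Lemma chord_sum_le_lengthOn g a b n t : is_partition a b n t ->
  ((chord_sum g n t)%:E <= lengthOn d g a b)%E.
Proof. by case=> h0 hn hm; apply: ereal_sup_ubound; exists n, t; split. Qed.

Lemma lengthOn_le g a b M :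
  (forall n t, is_partition a b n t -> ((chord_sum g n t)%:E <= M)%E) ->
  (lengthOn d g a b <= M)%E.
Proof. by move=> H; apply: ge_ereal_sup => l [n [t [h0 hn hm ->]]]; apply: H. Qed.

Lemma dist_le_lengthOn g a b : a <= b -> ((d (g a) (g b))%:E <= lengthOn d g a b)%E.
Proof.
by move=> ab; rewrite -chord_sum_pair; apply: chord_sum_le_lengthOn; apply: is_partition_pair.
Qed.

End ChordSum.

Section SegmentLength.
Context {R : realType} {disp : measure_display} {X : measurableType disp}.
Variable d : X -> X -> R.
Hypothesis dm : is_metric d.
Variables (g : R -> X) (L : R).
Hypothesis gL : clength d g = L%:E.

Definition seglen a b := fine (lengthOn d g a b).

Lemma chord_sum_le_clength a b n t : 0 <= a -> b <= 1 -> is_partition a b n t ->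
  chord_sum d g n t <= L.
Proof.
move=> a0 b1 hp.
have h1 := is_partition_cat (is_partition_pair a0) hp.
have := chord_sum_le_lengthOn d g (is_partition_cat h1 (is_partition_pair b1)).
rewrite -/(clength d g) gL lee_fin chord_sum_cat; last by case: h1 => _ -> _.
rewrite chord_sum_cat ?chord_sum_pair; last by case: hp => -> _ _.
have := metric_ge0 dm (g 0) (g a); have := metric_ge0 dm (g b) (g 1); lra.
Qed.

Lemma lengthOn_seglen a b : 0 <= a -> a <= b -> b <= 1 ->
  lengthOn d g a b = (seglen a b)%:E.
Proof.
move=> a0 ab b1.
have lo := dist_le_lengthOn d g ab.
have up : (lengthOn d g a b <= L%:E)%E.
  by apply: lengthOn_le => n t hp; rewrite lee_fin; apply: chord_sum_le_clength hp.
by rewrite /seglen; move: lo up; case: (lengthOn d g a b).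
Qed.

Lemma chord_sum_le_seglen a b n t : 0 <= a -> b <= 1 -> is_partition a b n t ->
  chord_sum d g n t <= seglen a b.
Proof.
move=> a0 b1 hp; have ab := is_partition_le hp.
by rewrite -lee_fin -lengthOn_seglen //; apply: chord_sum_le_lengthOn.
Qed.

Lemma seglen_le a b M : 0 <= a -> a <= b -> b <= 1 ->
  (forall n t, is_partition a b n t -> chord_sum d g n t <= M) -> seglen a b <= M.
Proof.
move=> a0 ab b1 H; rewrite -lee_fin -lengthOn_seglen //.
by apply: lengthOn_le => n t hp; rewrite lee_fin; apply: H.
Qed.

Lemma seglen_approx a b e : 0 <= a -> a <= b -> b <= 1 -> 0 < e ->
  exists n t, is_partition a b n t /\ seglen a b - e < chord_sum d g n t.
Proof.
move=> a0 ab b1 e0.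
have : ((seglen a b - e)%:E < lengthOn d g a b)%E.
  by rewrite lengthOn_seglen // lte_fin; lra.
case/ereal_sup_gt => _ [n [t [h0 hn hm ->]]]; rewrite lte_fin => H.
by exists n, t; split.
Qed.

Lemma dist_le_seglen a b : 0 <= a -> a <= b -> b <= 1 -> d (g a) (g b) <= seglen a b.
Proof.
move=> a0 ab b1; rewrite -(chord_sum_pair d).
by apply: chord_sum_le_seglen => //; apply: is_partition_pair.
Qed.

Lemma seglen_ge0 a b : 0 <= a -> a <= b -> b <= 1 -> 0 <= seglen a b.
Proof. by move=> a0 ab b1; apply: le_trans (dist_le_seglen a0 ab b1); apply: metric_ge0. Qed.

Lemma seglen_superadditive a b c : 0 <= a -> a <= b -> b <= c -> c <= 1 ->
  seglen a b + seglen b c <= seglen a c.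
Proof.
move=> a0 ab bc c1; apply/ler_addgt0Pr => e e0.
have e2 : 0 < e / 2 by lra.
have [n [t [h1 H1]]] := seglen_approx a0 ab (le_trans bc c1) e2.
have [m [u [h2 H2]]] := seglen_approx (le_trans a0 ab) bc c1 e2.
have := chord_sum_le_seglen a0 c1 (is_partition_cat h1 h2).
rewrite chord_sum_cat; last by case: h1 => _ -> _; case: h2.
lra.
Qed.

Lemma seglenxx a : 0 <= a -> a <= 1 -> seglen a a = 0.
Proof.
move=> a0 a1; have := seglen_superadditive a0 (lexx a) (lexx a) a1.
have := seglen_ge0 a0 (lexx a) a1; lra.
Qed.

Lemma chord_sum_le_seglen_split b c : forall n a t, is_partition a c n t ->
  a <= b -> b <= c -> 0 <= a -> c <= 1 -> chord_sum d g n t <= seglen a b + seglen b c.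
Proof.
elim=> [|n IH] a t hp ab bc a0 c1.
  case: hp => h0 hn _; rewrite chord_sum0.
  have := seglen_ge0 a0 ab (le_trans bc c1).
  have := seglen_ge0 (le_trans a0 ab) bc c1; lra.
have [h0 hn hm] := hp.
have /andP[at1 t1c] := is_partition_range hp (isT : (1 <= n.+1)%N).
rewrite chord_sumS h0.
case: (leP b (t 1%N)) => hb.
  have hu : is_partition b c n.+1 (fun i => if i == 0%N then b else t i).
    by split => //; case => [|i] hi /=; last apply: hm.
  have := chord_sum_le_seglen (le_trans a0 ab) c1 hu; rewrite chord_sumS /=.
  have := metric_triangle_le dm (g a) (g b) (g (t 1%N)).
  have := dist_le_seglen a0 ab (le_trans bc c1); lra.
have := IH _ _ (is_partition_behead hp) (ltW hb) bc (le_trans a0 at1) c1.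
have := dist_le_seglen a0 at1 (le_trans t1c c1).
have := seglen_superadditive a0 at1 (ltW hb) (le_trans bc c1); lra.
Qed.

Lemma seglen_add a b c : 0 <= a -> a <= b -> b <= c -> c <= 1 ->
  seglen a c = seglen a b + seglen b c.
Proof.
move=> a0 ab bc c1; apply/eqP; rewrite eq_le seglen_superadditive // andbT.
apply: seglen_le => //; first exact: le_trans bc.
by move=> n t hp; apply: chord_sum_le_seglen_split hp ab bc a0 c1.
Qed.

Lemma chord_sum_first_step a c : forall n t, is_partition a c n t ->
  a < c -> 0 <= a -> c <= 1 ->
  exists2 v, a < v <= c & chord_sum d g n t <= d (g a) (g v) + seglen v c.
Proof.
elim=> [|n IH] t hp ac a0 c1.
  by case: hp => h0 hn _; move: ac; rewrite -h0 -hn ltxx.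
have [h0 hn hm] := hp.
have /andP[at1 t1c] := is_partition_range hp (isT : (1 <= n.+1)%N).
rewrite chord_sumS h0.
case: (ltP a (t 1%N)) => ha.
  exists (t 1%N); first by rewrite ha t1c.
  have := chord_sum_le_seglen (ltW (le_lt_trans a0 ha)) c1 (is_partition_behead hp); lra.
have e : t 1%N = a by apply/le_anti; rewrite ha at1.
rewrite e (metricxx dm) add0r; apply: IH => //.
by rewrite -e; apply: is_partition_behead.
Qed.

Lemma chord_sum_last_step c : forall n a t, is_partition a c n t ->
  a < c -> 0 <= a -> c <= 1 ->
  exists2 v, a <= v < c & chord_sum d g n t <= seglen a v + d (g v) (g c).
Proof.
elim=> [|n IH] a t hp ac a0 c1.
  by case: hp => h0 hn _; move: ac; rewrite -h0 -hn ltxx.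
have hp' := is_partition_behead hp.
have [h0 hn hm] := hp.
have /andP[at1 t1c] := is_partition_range hp (isT : (1 <= n.+1)%N).
rewrite chord_sumS h0.
case: (ltP (t 1%N) c) => hc.
  have [v /andP[v1 vc] Hv] := IH _ _ hp' hc (le_trans a0 at1) c1.
  exists v; first by rewrite (le_trans at1 v1) vc.
  have := dist_le_seglen a0 at1 (le_trans t1c c1).
  have := seglen_superadditive a0 at1 v1 (le_trans (ltW vc) c1); lra.
have e : t 1%N = c by apply/le_anti; rewrite hc t1c.
exists a; first by rewrite lexx ac.
have c0 : 0 <= c by apply: le_trans a0 (ltW ac).
move: hp'; rewrite e => hp'.
have := chord_sum_le_seglen c0 c1 hp'.
rewrite seglenxx // seglenxx //; last exact: le_trans (ltW ac) c1.
have := seglen_ge0 a0 (ltW ac) c1; lra.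
Qed.

End SegmentLength.

Section ArcLength.
Context {R : realType} {disp : measure_display} {X : measurableType disp}.
Variable d : X -> X -> R.
Hypothesis dm : is_metric d.
Variables (g : R -> X) (L : R).
Hypothesis gL : clength d g = L%:E.
Hypothesis gc : curve_cont d g.

Local Notation seglen := (seglen d g).

Lemma seglen_right_small t0 e : 0 <= t0 -> t0 < 1 -> 0 < e ->
  exists2 t1, t0 < t1 <= 1 & seglen t0 t1 < e.
Proof.
move=> t00 t01 e0; have e2 : 0 < e / 2 by lra.
have [n [t [hp H]]] := seglen_approx dm gL t00 (ltW t01) (lexx 1) e2.
have [v /andP[tv v1] Hv] := chord_sum_first_step dm gL hp t01 t00 (lexx 1).
have [del del0 Hdel] := gc (t := t0) (ltac:(rewrite t00 ltW //)) e2.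
pose t1 := Num.min v (t0 + del / 2).
have h1 : t1 <= v by rewrite /t1 ge_min lexx.
have h2 : t1 <= t0 + del / 2 by rewrite /t1 ge_min lexx orbT.
have h3 : t0 < t1 by rewrite /t1 lt_min tv /=; lra.
exists t1; first by rewrite h3 (le_trans h1 v1).
have hd : d (g t0) (g t1) < e / 2.
  rewrite (metricC dm); apply: Hdel; first by apply/andP; split; lra.
  rewrite ger0_norm; lra.
have := seglen_add dm gL (ltW (le_lt_trans t00 h3)) h1 v1 (lexx 1).
have := seglen_add dm gL t00 (ltW h3) (le_trans h1 v1) (lexx 1).
have := dist_le_seglen dm gL (ltW (le_lt_trans t00 h3)) h1 v1.
have := metric_triangle_le dm (g t0) (g t1) (g v).
lra.
Qed.

Lemma seglen_left_small t0 e : 0 < t0 -> t0 <= 1 -> 0 < e ->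
  exists2 t1, 0 <= t1 < t0 & seglen t1 t0 < e.
Proof.
move=> t00 t01 e0; have e2 : 0 < e / 2 by lra.
have [n [t [hp H]]] := seglen_approx dm gL (lexx 0) (ltW t00) t01 e2.
have [v /andP[v0 vt] Hv] := chord_sum_last_step dm gL hp t00 (lexx 0) t01.
have [del del0 Hdel] := gc (t := t0) (ltac:(rewrite t01 (ltW t00) //)) e2.
pose t1 := Num.max v (t0 - del / 2).
have h1 : v <= t1 by rewrite /t1 le_max lexx.
have h2 : t0 - del / 2 <= t1 by rewrite /t1 le_max lexx orbT.
have h3 : t1 < t0 by rewrite /t1 gt_max vt /=; lra.
exists t1; first by rewrite h3 (le_trans v0 h1).
have hd : d (g t1) (g t0) < e / 2.
  apply: Hdel; first by apply/andP; split; lra.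
  rewrite ler0_norm; lra.
have := seglen_add dm gL v0 h1 (ltW h3) t01.
have := seglen_add dm gL (lexx 0) (le_trans v0 h1) (ltW h3) t01.
have := seglen_add dm gL (lexx 0) v0 h1 (le_trans (ltW h3) t01).
have := dist_le_seglen dm gL v0 h1 (le_trans (ltW h3) t01).
have := metric_triangle_le dm (g v) (g t1) (g t0).
lra.
Qed.

Definition cumlen t := seglen 0 t.

Definition reach_set (s : R) :=
  [set t : R | 0 <= t <= 1 /\ (s%:E <= lengthOn d g 0 t)%E].
Definition arcparam s := inf (reach_set s).

Lemma cumlen0 : cumlen 0 = 0.
Proof. exact: (seglenxx dm gL). Qed.

Lemma cumlen1 : cumlen 1 = L.
Proof. by rewrite /cumlen /seglen -/(clength d g) gL. Qed.

Lemma cumlen_mono a b : 0 <= a -> a <= b -> b <= 1 -> cumlen a <= cumlen b.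
Proof.
move=> a0 ab b1; rewrite /cumlen (seglen_add dm gL (lexx 0) a0 ab b1).
by rewrite lerDl (seglen_ge0 dm gL).
Qed.

Lemma cumlen_range t : 0 <= t -> t <= 1 -> 0 <= cumlen t <= L.
Proof. by move=> t0 t1; rewrite -cumlen0 -cumlen1 !cumlen_mono. Qed.

Lemma reach_setP s t : 0 <= t -> t <= 1 -> reach_set s t <-> s <= cumlen t.
Proof.
move=> t0 t1; rewrite /reach_set /= /cumlen (lengthOn_seglen dm gL) // lee_fin t0 t1.
by split => [[]|].
Qed.

Lemma reach_set_neq0 s : s <= L -> reach_set s !=set0.
Proof. by move=> sL; exists 1; apply/reach_setP => //; rewrite cumlen1. Qed.

Lemma reach_set_lbound s : has_lbound (reach_set s).
Proof. by exists 0 => t [/andP[]]. Qed.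

Lemma arcparam_range s : s <= L -> 0 <= arcparam s <= 1.
Proof.
move=> sL; apply/andP; split.
  by apply: lb_le_inf; [exact: reach_set_neq0 | move=> t [/andP[]]].
apply: ge_inf; first exact: reach_set_lbound.
by apply/reach_setP => //; rewrite cumlen1.
Qed.

Lemma arcparam_le s t : 0 <= t -> t <= 1 -> s <= cumlen t -> arcparam s <= t.
Proof. by move=> t0 t1 st; apply: ge_inf; [exact: reach_set_lbound | apply/reach_setP]. Qed.

Lemma cumlen_arcparam_le s : 0 <= s -> s <= L -> cumlen (arcparam s) <= s.
Proof.
move=> s0 sL; have /andP[ta0 ta1] := arcparam_range sL.
rewrite leNgt; apply/negP => H.
have tpos : 0 < arcparam s.
  rewrite lt_neqAle ta0 andbT; apply/negP => /eqP e.
  by move: H; rewrite -e cumlen0 ltNge s0.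
have e0 : 0 < cumlen (arcparam s) - s by lra.
have [t1 /andP[t10 t1t] Ht] := seglen_left_small tpos ta1 e0.
have := seglen_add dm gL (lexx 0) t10 (ltW t1t) ta1; rewrite -!/(cumlen _) => split.
have : arcparam s <= t1 by apply: arcparam_le => //; [exact: le_trans (ltW t1t) ta1 | lra].
by rewrite leNgt t1t.
Qed.

Lemma cumlen_arcparam_ge s : s <= L -> s <= cumlen (arcparam s).
Proof.
move=> sL; have /andP[ta0 ta1] := arcparam_range sL.
rewrite leNgt; apply/negP => H.
have t1 : arcparam s < 1.
  rewrite lt_neqAle ta1 andbT; apply/negP => /eqP e.
  by move: H; rewrite e cumlen1 ltNge sL.
have e0 : 0 < s - cumlen (arcparam s) by lra.
have [u /andP[tu u1] Hu] := seglen_right_small ta0 t1 e0.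
have [y Sy yu] := inf_lt (reach_set_neq0 sL) tu.
have [/andP[y0 y1] _] := Sy.
have ty : arcparam s <= y by apply: ge_inf => //; exact: reach_set_lbound.
have := (reach_setP s y0 y1).1 Sy.
have := seglen_add dm gL (lexx 0) ta0 ty y1.
have := seglen_add dm gL ta0 ty (ltW yu) u1.
have := seglen_ge0 dm gL (le_trans ta0 ty) (ltW yu) u1.
move: H Hu; rewrite /cumlen; lra.
Qed.

Lemma cumlen_arcparam s : 0 <= s -> s <= L -> cumlen (arcparam s) = s.
Proof.
by move=> s0 sL; apply/le_anti; rewrite cumlen_arcparam_le // cumlen_arcparam_ge.
Qed.

Lemma arcparam_mono s s' : s <= s' -> s' <= L -> arcparam s <= arcparam s'.
Proof.
move=> ss sL; apply: lb_le_inf; first exact: reach_set_neq0.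
move=> t St; have [/andP[t0 t1] _] := St.
apply: arcparam_le => //; have := (reach_setP s' t0 t1).1 St; lra.
Qed.

Lemma arclenE s : arclen d g s = g (arcparam s).
Proof. by []. Qed.

Lemma arclen_cumlen t : 0 <= t -> t <= 1 -> arclen d g (cumlen t) = g t.
Proof.
move=> t0 t1; rewrite arclenE; apply: (metric_eq0 dm).
have /andP[e0 eL] := cumlen_range t0 t1.
have /andP[ta0 ta1] := arcparam_range eL.
have tt : arcparam (cumlen t) <= t by apply: arcparam_le.
have := dist_le_seglen dm gL ta0 tt t1.
have := seglen_add dm gL (lexx 0) ta0 tt t1.
have := cumlen_arcparam e0 eL; rewrite /cumlen => h1 h2 h3.
by apply/le_anti; rewrite metric_ge0 // andbT; lra.
Qed.

Lemma arclen_dist_le s s' : 0 <= s -> s <= s' -> s' <= L ->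
  d (arclen d g s) (arclen d g s') <= s' - s.
Proof.
move=> s0 ss sL; rewrite !arclenE.
have sL' := le_trans ss sL.
have /andP[ta0 ta1] := arcparam_range sL'.
have /andP[tb0 tb1] := arcparam_range sL.
have tt := arcparam_mono ss sL.
have := dist_le_seglen dm gL ta0 tt tb1.
have := seglen_add dm gL (lexx 0) ta0 tt tb1.
have := cumlen_arcparam s0 sL'; have := cumlen_arcparam (le_trans s0 ss) sL.
rewrite /cumlen; lra.
Qed.

End ArcLength.

Section Reparametrisation.
Context {R : realType} {disp : measure_display} {X : measurableType disp}.
Variable d : X -> X -> R.
Hypothesis dm : is_metric d.
Variables (g : R -> X) (L : R).
Hypothesis gL : clength d g = L%:E.
Hypothesis gc : curve_cont d g.
Hypothesis L_gt0 : 0 < L.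

Definition arc_reparam (t : R) := arclen d g (L * t).

Lemma arc_reparam_dist_le s t : 0 <= s -> s <= t -> t <= 1 ->
  d (arc_reparam s) (arc_reparam t) <= L * (t - s).
Proof.
move=> s0 st t1; rewrite /arc_reparam mulrBr.
apply: (arclen_dist_le dm gL gc).
- by rewrite mulr_ge0 // ltW.
- by rewrite ler_pM2l.
- by rewrite -{2}(mulr1 L) ler_pM2l.
Qed.

Lemma arc_reparam_lip : curve_lip d arc_reparam.
Proof.
exists L => s t /andP[s0 s1] /andP[t0 t1].
case: (leP s t) => st.
  by rewrite distrC ger0_norm ?subr_ge0 //; exact: arc_reparam_dist_le.
rewrite (metricC dm) ger0_norm; last by rewrite subr_ge0 ltW.
exact: arc_reparam_dist_le (ltW st) s1.
Qed.

Lemma arc_reparam0 : arc_reparam 0 = g 0.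
Proof. by rewrite /arc_reparam mulr0 -{1}(cumlen0 dm gL) (arclen_cumlen dm gL gc). Qed.

Lemma arc_reparam1 : arc_reparam 1 = g 1.
Proof. by rewrite /arc_reparam mulr1 -(cumlen1 gL) (arclen_cumlen dm gL gc). Qed.

Lemma arc_reparam_chord_sum_le b : forall n a t, is_partition a b n t ->
  0 <= a -> b <= 1 -> chord_sum d arc_reparam n t <= L * (b - a).
Proof.
elim=> [|n IH] a t hp a0 b1.
  by case: hp => h0 hn _; rewrite chord_sum0 -h0 -hn subrr mulr0.
have [h0 hn hm] := hp.
have /andP[at1 t1b] := is_partition_range hp (isT : (1 <= n.+1)%N).
rewrite chord_sumS h0.
have := IH _ _ (is_partition_behead hp) (le_trans a0 at1) b1.
have := arc_reparam_dist_le a0 at1 (le_trans t1b b1).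
rewrite !mulrBr; lra.
Qed.

Lemma chord_sum_arc_reparam n t : is_partition 0 1 n t ->
  chord_sum d arc_reparam n (fun i => cumlen d g (t i) / L) = chord_sum d g n t.
Proof.
move=> hp; apply: eq_bigr => i _; rewrite /arc_reparam.
have /andP[ti0 ti1] := is_partition_range hp (ltnW (ltn_ord i)).
have /andP[tj0 tj1] := is_partition_range hp (ltn_ord i).
rewrite ![L * (_ / L)]mulrC !divfK ?gt_eqF //.
by rewrite !(arclen_cumlen dm gL gc).
Qed.

Lemma is_partition_cumlen n t : is_partition 0 1 n t ->
  is_partition 0 1 n (fun i => cumlen d g (t i) / L).
Proof.
move=> hp; have [h0 hn hm] := hp; split.
- by rewrite h0 (cumlen0 dm gL) mul0r.
- by rewrite hn (cumlen1 gL) divff // gt_eqF.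
- move=> i hi; apply: ler_wpM2r; first by rewrite invr_ge0 ltW.
  have /andP[ti0 ti1] := is_partition_range hp (ltnW hi).
  have /andP[tj0 tj1] := is_partition_range hp hi.
  by apply: (cumlen_mono dm gL) => //; apply: hm.
Qed.

Lemma arc_reparam_clength : clength d arc_reparam = L%:E.
Proof.
have up : (clength d arc_reparam <= L%:E)%E.
  apply: lengthOn_le => n t hp; rewrite lee_fin.
  by have := arc_reparam_chord_sum_le hp (lexx 0) (lexx 1); rewrite subr0 mulr1.
have lo : ((d (arc_reparam 0) (arc_reparam 1))%:E <= clength d arc_reparam)%E :=
  dist_le_lengthOn d arc_reparam ler01.
have fin : clength d arc_reparam = (fine (clength d arc_reparam))%:E.
  by move: up lo; case: (clength d arc_reparam).
rewrite fin; congr (_%:E); apply/le_anti/andP; split; first by rewrite -lee_fin -fin.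
apply/ler_addgt0Pr => e e0.
have [n [t [hp H]]] := seglen_approx dm gL (lexx 0) ler01 (lexx 1) e0.
have := chord_sum_le_lengthOn d arc_reparam (is_partition_cumlen hp).
rewrite -/(clength d arc_reparam) fin lee_fin chord_sum_arc_reparam //.
by move: H; rewrite -/(cumlen d g 1) (cumlen1 gL); lra.
Qed.

Lemma arc_reparam_lengthOn t : 0 <= t -> t <= 1 ->
  lengthOn d arc_reparam 0 t = (L * t)%:E.
Proof.
move=> t0 t1; rewrite (lengthOn_seglen dm arc_reparam_clength) //; congr (_%:E).
have := cumlen1 arc_reparam_clength; rewrite /cumlen.
have := seglen_add dm arc_reparam_clength (lexx 0) t0 t1 (lexx 1).
have := seglen_le dm arc_reparam_clength (lexx 0) t0 t1
  (fun n u hp => arc_reparam_chord_sum_le hp (lexx 0) t1).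
have := seglen_le dm arc_reparam_clength t0 t1 (lexx 1)
  (fun n u hp => arc_reparam_chord_sum_le hp t0 (lexx 1)).
rewrite !mulrBr; lra.
Qed.

Lemma arclen_arc_reparam s : 0 <= s -> s <= L -> arclen d arc_reparam s = arclen d g s.
Proof.
move=> s0 sL; rewrite arclenE.
have sL0 : 0 <= s / L by rewrite divr_ge0 // ltW.
have sL1 : s / L <= 1 by rewrite ler_pdivrMr // mul1r.
suff -> : arcparam d arc_reparam s = s / L by rewrite /arc_reparam mulrC divfK // gt_eqF.
apply/le_anti/andP; split.
  apply: (arcparam_le dm arc_reparam_clength) => //.
  rewrite /cumlen -lee_fin -(lengthOn_seglen dm arc_reparam_clength) //.
  by rewrite arc_reparam_lengthOn // mulrC divfK // gt_eqF.
apply: lb_le_inf; first exact: (reach_set_neq0 dm arc_reparam_clength sL).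
move=> t [/andP[t0 t1]]; rewrite arc_reparam_lengthOn // lee_fin => H.
by rewrite ler_pdivrMr // mulrC.
Qed.

Lemma line_int_arc_reparam rho : line_int d rho arc_reparam = line_int d rho g.
Proof.
rewrite /line_int arc_reparam_clength gL; apply: eq_integral => s.
by rewrite inE /= in_itv /= => /andP[s0 sL]; rewrite arclen_arc_reparam.
Qed.

End Reparametrisation.

Lemma lipschitz_reparam {R : realType} {disp : measure_display} {X : measurableType disp}
  (d : X -> X -> R) (g : R -> X) (L : R) :
  is_metric d -> curve_cont d g -> clength d g = L%:E ->
  exists h, [/\ curve_lip d h, h 0 = g 0, h 1 = g 1, clength d h = L%:E &
     forall rho, line_int d rho h = line_int d rho g].
Proof.
move=> dm gc gL.
have /andP[L0 _] := cumlen_range dm gL ler01 (lexx 1); rewrite (cumlen1 gL) in L0.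
have [L_gt0 | L_le0] := ltP 0 L.
  exists (arc_reparam d g L); split.
  - exact: arc_reparam_lip.
  - exact: arc_reparam0.
  - exact: arc_reparam1.
  - exact: arc_reparam_clength.
  - exact: line_int_arc_reparam.
have L_eq0 : L = 0 by apply/le_anti; rewrite L_le0 L0.
(* a curve of length zero is constant, hence Lipschitz *)
exists g; split => //; exists 0 => s t /andP[s0 s1] /andP[t0 t1]; rewrite mul0r.
suff const a b : 0 <= a -> a <= b -> b <= 1 -> d (g a) (g b) <= 0.
  by case: (leP s t) => st; [exact: const | rewrite (metricC dm); exact: const (ltW st) _].
move=> a0 ab b1; apply: le_trans (dist_le_seglen dm gL a0 ab b1) _.
have /andP[+ _] := cumlen_range dm gL a0 (le_trans ab b1).
have := seglen_add dm gL (lexx 0) a0 ab b1.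
have := cumlen_mono dm gL (le_trans a0 ab) b1 (lexx 1).
rewrite (cumlen1 gL) L_eq0 /cumlen; lra.
Qed.

Section Modulus.
Context {R : realType} {disp : measure_display} {X : measurableType disp}.
Variables (d : X -> X -> R) (mu : {measure set X -> \bar R}) (p : \bar R).

Lemma le_Mod (G1 G0 : set (R -> X)) :
  (forall rho, admissible d G0 rho -> admissible d G1 rho) ->
  (Mod d mu p G1 <= Mod d mu p G0)%E.
Proof.
move=> H; rewrite /Mod; case: p => [q| |];
  by apply: ereal_inf_le_tmp => _ [rho Hr <-]; exists rho => //; apply: H.
Qed.

Lemma Mod_set0 : p != 0%E -> (0 < mu [set: X])%E -> Mod d mu p set0 = 0%E.
Proof.
move=> p0 muT.
have adm0 : admissible d set0 (cst 0%E) by split => //; exact: measurable_cst.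
have ess_sup0 : ereal_inf [set ess_sup mu rho | rho in admissible d set0] = 0%E.
  apply/le_anti/andP; split.
    apply: ge_ereal_inf; exists 0%E => //; exists (cst 0%E) => //.
    exact: ess_sup_cst.
  apply: le_ereal_inf_tmp => _ [rho [_ rho0 _] <-].
  by apply: ess_sup_gee => //; apply: nearW.
rewrite /Mod; case: p p0 => [q q0|_|_] //; apply/le_anti/andP; split.
  apply: ge_ereal_inf; exists 0%E => //; exists (cst 0%E) => //.
  by under eq_fun do rewrite poweR0r //; rewrite integral0.
apply: le_ereal_inf_tmp => _ [rho [_ rho0 _] <-].
by apply: integral_ge0 => x _; exact: poweR_ge0.
Qed.

End Modulus.

Section Balls.
Context {R : realType} {disp : measure_display} {X : measurableType disp}.
Variable d : X -> X -> R.
Hypothesis dm : is_metric d.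

Lemma dopen_oball x r : dopen d (oball d x r).
Proof.
move=> z hz; exists (r - d x z); first by rewrite subr_gt0.
move=> w hw; rewrite /oball /=.
have := metric_triangle_le dm x z w; move: hw hz; rewrite /oball /=; lra.
Qed.

Hypothesis hb : borel_structure d.

Lemma measurable_oball x r : measurable (oball d x r).
Proof. by rewrite hb; apply: sub_gen_smallest; exact: dopen_oball. Qed.

Lemma measure_setT_gt0 (mu : {measure set X -> \bar R}) (x : X) :
  balls_pos_finite d mu -> (0 < mu [set: X])%E.
Proof.
move=> /(_ x 1 ltr01) /andP[mu_gt0 _]; apply: lt_le_trans mu_gt0 _.
by apply: le_measure => //; rewrite inE //; exact: measurable_oball.
Qed.

End Balls.

Section EssentialLength.
Context {R : realType} {disp : measure_display} {X : measurableType disp}.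
Variable d : X -> X -> R.
Hypothesis dm : is_metric d.
Variables (mu : {measure set X -> \bar R}) (p : \bar R).
Hypothesis hb : borel_structure d.
Hypothesis hpos : balls_pos_finite d mu.

Lemma exists_short_curve x y del (G0 : set (R -> X)) :
  thick_geodesic d mu p -> 0 < del -> Mod d mu p G0 = 0%E ->
  exists2 h, (GammaLip d (cball d x del) (cball d y del) `\` G0) h &
    (clength d h <= (d x y + 3 * del)%:E)%E.
Proof.
move=> thick del0 G0_null; apply: contrapT => no_short.
pose D := d x y + 2 * del.
have D0 : 0 < D by rewrite /D; have := metric_ge0 dm x y; lra.
pose C := 1 + del / D.
have C1 : 1 < C by rewrite /C ltrDl divr_gt0.
have short g : oball d x del (g 0) -> oball d y del (g 1) ->
    C * d (g 0) (g 1) <= d x y + 3 * del.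
  rewrite /oball /= => gx gy.
  have : C * d (g 0) (g 1) <= C * D.
    rewrite ler_wpM2l ?(ltW (lt_trans ltr01 C1)) //.
    have := metric_triangle_le dm (g 0) x (g 1).
    have := metric_triangle_le dm x y (g 1).
    move: gx gy; rewrite (metricC dm (g 0) x) /D; lra.
  have -> : C * D = D + del by rewrite /C mulrDl mul1r divfK ?gt_eqF.
  rewrite /D; lra.
have ball_gt0 z : (0 < mu (oball d z del))%E by have /andP[] := hpos z del0.
have := thick C C1 _ _ (measurable_oball dm hb x del) (measurable_oball dm hb y del)
  (ball_gt0 x) (ball_gt0 y).
apply/negP; rewrite -leNgt -G0_null; apply: le_Mod => rho [rho_meas rho0 rho_adm].
split => // g [gc [gx [gy g_len]]].
have lo : ((d (g 0) (g 1))%:E <= clength d g)%E := dist_le_lengthOn d g ler01.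
have gL : clength d g = (fine (clength d g))%:E by move: lo g_len; case: (clength d g).
have [h [h_lip h0 h1 hL h_int]] := lipschitz_reparam dm gc gL.
rewrite -h_int; apply: rho_adm; apply: contrapT => hG0; apply: no_short.
exists h.
  by do 2 split => //; split; [rewrite h0 | rewrite h1]; exact: ltW.
by rewrite hL -gL (le_trans g_len) // lee_fin short.
Qed.

Lemma ess_len_cball_ge x y del : p != 0%E -> 0 < del ->
  ((d x y - 2 * del)%:E <= ess_len d mu p (GammaLip d (cball d x del) (cball d y del)))%E.
Proof.
move=> p0 del0; apply: le_ereal_sup_tmp.
exists (ereal_inf [set clength d g | g in GammaLip d (cball d x del) (cball d y del) `\` set0]).
  by exists set0 => //; apply: Mod_set0 => //; exact: measure_setT_gt0 x hpos.
apply: le_ereal_inf_tmp => _ [h [[_ [h0 h1]] _] <-].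
apply: le_trans (dist_le_lengthOn d h ler01); rewrite lee_fin.
have := metric_triangle_le dm x (h 0) y; have := metric_triangle_le dm (h 0) (h 1) y.
move: h0 h1; rewrite /cball /= (metricC dm (h 1) y); lra.
Qed.

Lemma ess_len_cball_le x y del : thick_geodesic d mu p -> 0 < del ->
  (ess_len d mu p (GammaLip d (cball d x del) (cball d y del)) <= (d x y + 3 * del)%:E)%E.
Proof.
move=> thick del0; apply: ge_ereal_sup => _ [G0 G0_null <-].
have [h Gh h_len] := exists_short_curve x y thick del0 G0_null.
by apply: ge_ereal_inf; exists (clength d h) => //; exists h.
Qed.

Lemma dp'E x y : p != 0%E -> thick_geodesic d mu p -> dp' d mu p x y = (d x y)%:E.
Proof.
move=> p0 thick; rewrite /dp'; apply: cvg_lim => //.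
have bounds del : 0 < del ->
    ((d x y - 2 * del)%:E <= ess_len d mu p (GammaLip d (cball d x del) (cball d y del))
      <= (d x y + 3 * del)%:E)%E.
  by move=> del0; rewrite ess_len_cball_ge // ess_len_cball_le.
apply: cvg_EFin.
  near=> del; have del0 : 0 < del by near: del; exact: nbhs_right_gt.
  by have /andP[] := bounds del del0; case: (ess_len _ _ _ _).
apply/cvgrPdist_lt => e e0; near=> del.
have del0 : 0 < del by near: del; exact: nbhs_right_gt.
have del_small : del < e / 3 by near: del; apply: nbhs_right_lt; lra.
have /andP[] := bounds del del0; rewrite /comp.
case: (ess_len _ _ _ _) => //= r; rewrite !lee_fin => lo up.
by rewrite ltr_norml; apply/andP; split; lra.
Unshelve. all: end_near.
Qed.

End EssentialLength.

Theorem corollary5p10 (R : realType) (disp : measure_display)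
  (X : measurableType disp) (d : X -> X -> R)
  (mu : {measure set X -> \bar R}) (p : \bar R) :
  (1 <= p)%E ->
  is_metric d -> proper_space d -> borel_structure d ->
  balls_pos_finite d mu ->
  inf_doubling d mu ->
  thick_geodesic d mu p ->
  forall x y : X, (d x y)%:E = dp d mu p x y.
Proof.
move=> p1 dm _ hb hpos _ thick x y.
have p0 : p != 0%E by rewrite gt_eqF // (lt_le_trans lte01 p1).
have dp'_d u v : dp' d mu p u v = (d u v)%:E := dp'E dm hb hpos u v p0 thick.
rewrite /dp; apply/le_anti/andP; split.
  apply: le_ereal_inf_tmp => _ [n [xs [_ <- <- ->]]].
  under eq_bigr do rewrite dp'_d.
  by rewrite sumEFin lee_fin; exact: (metric_chain dm).
apply: ereal_inf_lbound; exists 1%N, (fun i => if i == 0%N then x else y).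
by split => //; rewrite big_ord1 dp'_d.
Qed.
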